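(* For a multi-parameter family $\rho(\theta)=\sum_{k=1}^d p_k(\theta)|w_k(\theta)\rangle\langle w_k(\theta)|$ with a chosen smooth spectral decomposition as in the context, equality $H_{SLD}(\theta)=C_L(\theta)$ (as matrices) holds at $\theta$ if and only if $$\langle w_j^{(m)}(\theta)|w_k(\theta)\rangle=0\quad\text{for all } m\in\{1,\dots,p\}\text{ and all } j\neq k \text{ with } p_j(\theta)>0,\ p_k(\theta)>0.$$
   Context: Let $\Theta\subseteq\mathbb{R}^p$ be open and $\rho(\theta)=\sum_{k=1}^d p_k(\theta)|w_k(\theta)\rangle\langle w_k(\theta)|$, where $p_k:\Theta\to[0,1]$ are smooth with $\sum_k p_k=1$ and $|w_1(\theta)\rangle,\dots,|w_d(\theta)\rangle$ is an orthonormal basis of $\mathbb{C}^d$ depending smoothly on $\theta$. Write $|w_k^{(l)}\rangle=\frac{\partial}{\partial\theta^l}|w_k(\theta)\rangle$. Convention: indices $i$ with $p_i(\theta)=0$ are omitted from sums containing $1/p_i$. The $C_L$ quantum information is the $p\times p$ matrix $$C_L(\theta)_{kl}=\sum_i\frac{1}{p_i}\frac{\partial p_i}{\partial\theta^k}\frac{\partial p_i}{\partial\theta^l}+4\,\Re\sum_{i<j}(p_i+p_j)\langle w_i^{(k)}|w_j\rangle\langle w_j|w_i^{(l)}\rangle.$$ The SLD quantum information matrix is $H_{SLD}(\theta)_{kl}=\Re\,\mathrm{tr}\{\rho(\theta)\lambda_k(\theta)\lambda_l(\theta)\}$, where $\lambda_k(\theta)$ is any Hermitian solution of $\frac{\partial\rho}{\partial\theta^k}=\frac12(\rho\lambda_k+\lambda_k\rho)$.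 *)

From Stdlib Require Import Reals Lra.
Open Scope R_scope.

Fixpoint rsum (n : nat) (f : nat -> R) : R :=
  match n with O => 0 | S m => rsum m f + f m end.

(** * Complex numbers as pairs (real part, imaginary part) *)
Definition Cplx : Type := (R * R)%type.
Definition Cre (z : Cplx) : R := fst z.
Definition Cim (z : Cplx) : R := snd z.
Definition Czero : Cplx := (0, 0).
Definition Cone : Cplx := (1, 0).
Definition Cadd (z w : Cplx) : Cplx := (fst z + fst w, snd z + snd w).
Definition Cmul (z w : Cplx) : Cplx :=
  (fst z * fst w - snd z * snd w, fst z * snd w + snd z * fst w).
Definition Cconj (z : Cplx) : Cplx := (fst z, - snd z).
Definition RtoC (r : R) : Cplx := (r, 0).

Fixpoint Csum (n : nat) (f : nat -> Cplx) : Cplx :=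
  match n with O => Czero | S m => Cadd (Csum m f) (f m) end.

(** vectors of Cplx^d : nat -> Cplx (components 0..d-1);
    d x d matrices : nat -> nat -> Cplx (entries (a,b), a,b < d) *)

Definition braket (d : nat) (u v : nat -> Cplx) : Cplx :=
  Csum d (fun i => Cmul (Cconj (u i)) (v i)).

Definition mmul (d : nat) (A B : nat -> nat -> Cplx) : nat -> nat -> Cplx :=
  fun a b => Csum d (fun c => Cmul (A a c) (B c b)).

Definition mtrace (d : nat) (A : nat -> nat -> Cplx) : Cplx := Csum d (fun a => A a a).

Definition hermitian (d : nat) (A : nat -> nat -> Cplx) : Prop :=
  forall a b, (a < d)%nat -> (b < d)%nat -> A a b = Cconj (A b a).

(** * Parameter space R^p: points are  nat -> R ; only the coordinates
    0..p-1 are parameters (the other coordinates are never varied). *)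
Definition upd (x : nat -> R) (l : nat) (t : R) : nat -> R :=
  fun m => if Nat.eqb m l then t else x m.

Definition near (p : nat) (x y : nat -> R) (eps : R) : Prop :=
  (forall l, (l < p)%nat -> Rabs (y l - x l) < eps) /\
  (forall l, (p <= l)%nat -> y l = x l).

Definition open_p (p : nat) (U : (nat -> R) -> Prop) : Prop :=
  forall x, U x -> exists eps, 0 < eps /\ forall y, near p x y eps -> U y.

Definition cont_on (p : nat) (U : (nat -> R) -> Prop) (f : (nat -> R) -> R) : Prop :=
  forall x, U x -> forall eps, 0 < eps -> exists delta, 0 < delta /\
    forall y, U y -> near p x y delta -> Rabs (f y - f x) < eps.

Definition partial_at (f : (nat -> R) -> R) (l : nat) (x : nat -> R) (v : R) : Prop :=
  derivable_pt_lim (fun t => f (upd x l t)) (x l) v.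

Fixpoint Ck_on (p : nat) (U : (nat -> R) -> Prop) (n : nat) (f : (nat -> R) -> R) : Prop :=
  match n with
  | O => cont_on p U f
  | S m => cont_on p U f /\
      forall l, (l < p)%nat -> exists g : (nat -> R) -> R,
        (forall x, U x -> partial_at f l x (g x)) /\ Ck_on p U m g
  end.

Definition smooth_on (p : nat) (U : (nat -> R) -> Prop) (f : (nat -> R) -> R) : Prop :=
  forall n, Ck_on p U n f.

(** * The family rho(theta) = sum_k p_k(theta) |w_k(theta)><w_k(theta)| ;
    w k i x is the i-th component of |w_k(x)>. *)
Definition rho_of (d : nat) (pk : nat -> (nat -> R) -> R) (w : nat -> nat -> (nat -> R) -> Cplx)
  (x : nat -> R) : nat -> nat -> Cplx :=
  fun a b => Csum d (fun k => Cmul (RtoC (pk k x)) (Cmul (w k a x) (Cconj (w k b x)))).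

Definition H_SLD (d : nat) (rho : nat -> nat -> Cplx) (lam : nat -> nat -> nat -> Cplx)
  (k l : nat) : R :=
  Cre (mtrace d (mmul d rho (mmul d (lam k) (lam l)))).

(** C_L quantum information matrix entry, given the values at theta:
    pv i = p_i(theta), dp i k = dp_i/dtheta^k, wv i = |w_i(theta)>,
    dw i k = |w_i^{(k)}(theta)>. Terms with p_i = 0 are omitted. *)
Definition C_L (d : nat) (pv : nat -> R) (dp : nat -> nat -> R)
  (wv : nat -> nat -> Cplx) (dw : nat -> nat -> nat -> Cplx) (k l : nat) : R :=
  rsum d (fun i => if Req_EM_T (pv i) 0 then 0 else / pv i * dp i k * dp i l)
  + 4 * Cre (Csum d (fun j => Csum j (fun i =>
          Cmul (RtoC (pv i + pv j))
               (Cmul (braket d (dw i k) (wv j)) (braket d (wv j) (dw i l)))))).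

(** Fix θ and write W_i = |w_i(θ)⟩ (an orthonormal basis of C^d), P_i = p_i(θ)
   and a^m_{ij} = ⟨w_i|∂_m w_j⟩ (the connection coefficients).
   - Differentiating orthonormality gives ⟨∂_m w_i|w_j⟩ = -a^m_{ij}, hence
     a^m_{ji} = -conj(a^m_{ij}).
   - Differentiating ρ = Σ_k p_k |w_k⟩⟨w_k| gives the eigenbasis matrix
     elements ⟨w_i|∂_m ρ|w_j⟩ = δ_{ij} ∂_m p_i + (P_j - P_i) a^m_{ij}.
   - In the eigenbasis the SLD equation reads
     ⟨w_i|∂_m ρ|w_j⟩ = (P_i + P_j)/2 ⟨w_i|λ_m|w_j⟩, which determines every
     matrix element of λ_m with P_i + P_j > 0.
   - By completeness of the basis, H_SLD = Re Σ_{i,j} P_i ⟨w_i|λ_k|w_j⟩⟨w_j|λ_l|w_i⟩,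
     and substituting the matrix elements gives
       C_L(θ)_{kl} - H_SLD(θ)_{kl} = Σ_{i<j} 16 P_i P_j/(P_i+P_j) Re(a^k_{ij} conj a^l_{ij}).
   For k = l this is a sum of nonnegative terms; it vanishes iff a^m_{ij} = 0
   whenever P_i, P_j > 0, which is the theorem. *)

From Stdlib Require Import Reals Lra Lia Psatz Setoid Morphisms FunctionalExtensionality.
Open Scope R_scope.

Arguments Cadd : simpl never.
Arguments Cmul : simpl never.
Arguments Cconj : simpl never.
Arguments RtoC : simpl never.
Arguments Cre : simpl never.
Arguments Cim : simpl never.

(** ** Complex numbers as a commutative ring with conjugation *)

Definition Copp (z : Cplx) : Cplx := (- fst z, - snd z).
Definition Csub (z w : Cplx) : Cplx := Cadd z (Copp w).

Lemma C_ext (z w : Cplx) : fst z = fst w -> snd z = snd w -> z = w.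
Proof. destruct z, w; simpl; intros; subst; reflexivity. Qed.

Lemma Cring : ring_theory Czero Cone Cadd Cmul Csub Copp (@eq Cplx).
Proof.
  constructor; intros; apply C_ext;
    repeat match goal with z : Cplx |- _ => destruct z end;
    unfold Cadd, Cmul, Csub, Copp, Czero, Cone; simpl; ring.
Qed.
Add Ring Cring : Cring.

Lemma Cconj_mul (z w : Cplx) : Cconj (Cmul z w) = Cmul (Cconj z) (Cconj w).
Proof. destruct z, w; apply C_ext; unfold Cconj, Cmul; simpl; ring. Qed.
Lemma Cconj_add (z w : Cplx) : Cconj (Cadd z w) = Cadd (Cconj z) (Cconj w).
Proof. destruct z, w; apply C_ext; unfold Cconj, Cadd; simpl; ring. Qed.
Lemma Cconj_opp (z : Cplx) : Cconj (Copp z) = Copp (Cconj z).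
Proof. destruct z; apply C_ext; unfold Cconj, Copp; simpl; ring. Qed.
Lemma Cconj_invol (z : Cplx) : Cconj (Cconj z) = z.
Proof. destruct z; apply C_ext; unfold Cconj; simpl; ring. Qed.
Lemma Cconj_zero : Cconj Czero = Czero.
Proof. apply C_ext; unfold Cconj, Czero; simpl; ring. Qed.
Lemma Cconj_one : Cconj Cone = Cone.
Proof. apply C_ext; unfold Cconj, Cone; simpl; ring. Qed.
Lemma RtoC_add (a b : R) : RtoC (a + b) = Cadd (RtoC a) (RtoC b).
Proof. apply C_ext; unfold Cadd, RtoC; simpl; ring. Qed.
Lemma RtoC_mul (a b : R) : RtoC (a * b) = Cmul (RtoC a) (RtoC b).
Proof. apply C_ext; unfold Cmul, RtoC; simpl; ring. Qed.
Lemma RtoC_opp (a : R) : RtoC (- a) = Copp (RtoC a).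
Proof. apply C_ext; unfold Copp, RtoC; simpl; ring. Qed.
Lemma Cre_RtoC_mul (r : R) (z : Cplx) : Cre (Cmul (RtoC r) z) = r * Cre z.
Proof. unfold Cre, Cmul, RtoC; simpl; ring. Qed.

Lemma RtoC_mul_solve (r : R) (z w : Cplx) : Cmul (RtoC r) z = w -> r <> 0 ->
  z = Cmul (RtoC (/ r)) w.
Proof. intros H Hr; subst. destruct z; apply C_ext; unfold Cmul, RtoC; simpl; field; auto. Qed.

Lemma normsq_nonneg (z : Cplx) : 0 <= Cre (Cmul z (Cconj z)).
Proof. destruct z; unfold Cre, Cmul, Cconj; simpl. nra. Qed.
Lemma normsq_zero (z : Cplx) : Cre (Cmul z (Cconj z)) = 0 -> z = Czero.
Proof.
  destruct z as [a b]; unfold Cre, Cmul, Cconj; simpl; intros H.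
  apply C_ext; unfold Czero; simpl; nra.
Qed.

Lemma Csum_ext (n : nat) (f g : nat -> Cplx) :
  (forall i, (i < n)%nat -> f i = g i) -> Csum n f = Csum n g.
Proof.
  induction n; simpl; intros H; [reflexivity|].
  rewrite IHn by (intros; apply H; lia). rewrite H by lia. reflexivity.
Qed.
Lemma rsum_ext (n : nat) (f g : nat -> R) :
  (forall i, (i < n)%nat -> f i = g i) -> rsum n f = rsum n g.
Proof.
  induction n; simpl; intros H; [reflexivity|].
  rewrite IHn by (intros; apply H; lia). rewrite H by lia. reflexivity.
Qed.
#[export] Instance rsum_proper (n : nat) :
  Proper (pointwise_relation nat eq ==> eq) (rsum n).
Proof. intros f g H. apply rsum_ext. intros; apply H. Qed.

Lemma Csum_zero (n : nat) : Csum n (fun _ => Czero) = Czero.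
Proof. induction n; simpl; [reflexivity|]. rewrite IHn. ring. Qed.
Lemma Csum_add (n : nat) (f g : nat -> Cplx) :
  Csum n (fun i => Cadd (f i) (g i)) = Cadd (Csum n f) (Csum n g).
Proof. induction n; simpl; [apply C_ext; unfold Cadd, Czero; simpl; ring|]. rewrite IHn. ring. Qed.
Lemma Csum_mul_l (n : nat) (c : Cplx) (f : nat -> Cplx) :
  Csum n (fun i => Cmul c (f i)) = Cmul c (Csum n f).
Proof. induction n; simpl; [apply C_ext; unfold Cmul, Czero; simpl; ring|]. rewrite IHn. ring. Qed.
Lemma Csum_mul_r (n : nat) (c : Cplx) (f : nat -> Cplx) :
  Csum n (fun i => Cmul (f i) c) = Cmul (Csum n f) c.
Proof. induction n; simpl; [apply C_ext; unfold Cmul, Czero; simpl; ring|]. rewrite IHn. ring. Qed.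
Lemma Csum_opp (n : nat) (f : nat -> Cplx) : Csum n (fun i => Copp (f i)) = Copp (Csum n f).
Proof. induction n; simpl; [apply C_ext; unfold Copp, Czero; simpl; ring|]. rewrite IHn. ring. Qed.
Lemma Csum_swap (n m : nat) (f : nat -> nat -> Cplx) :
  Csum n (fun i => Csum m (fun j => f i j)) = Csum m (fun j => Csum n (fun i => f i j)).
Proof.
  revert m f; induction n; intros m f; simpl; [symmetry; apply Csum_zero|].
  rewrite IHn, <- Csum_add. reflexivity.
Qed.
Lemma Cconj_Csum (n : nat) (f : nat -> Cplx) : Cconj (Csum n f) = Csum n (fun i => Cconj (f i)).
Proof. induction n; simpl; [apply Cconj_zero|]. rewrite Cconj_add, IHn. reflexivity. Qed.
Lemma Cre_Csum (n : nat) (f : nat -> Cplx) : Cre (Csum n f) = rsum n (fun i => Cre (f i)).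
Proof. induction n; simpl; [reflexivity|]. rewrite <- IHn. reflexivity. Qed.
Lemma Csum_prod (n m : nat) (f g : nat -> Cplx) :
  Cmul (Csum n f) (Csum m g) = Csum n (fun i => Csum m (fun j => Cmul (f i) (g j))).
Proof.
  rewrite <- Csum_mul_r. apply Csum_ext; intros i _. rewrite <- Csum_mul_l. reflexivity.
Qed.

Lemma rsum_zero (n : nat) : rsum n (fun _ => 0) = 0.
Proof. induction n; simpl; [reflexivity|rewrite IHn; ring]. Qed.
Lemma rsum_plus (n : nat) (f g : nat -> R) : rsum n (fun i => f i + g i) = rsum n f + rsum n g.
Proof. induction n; simpl; [ring|rewrite IHn; ring]. Qed.
Lemma rsum_scal (n : nat) (c : R) (f : nat -> R) : rsum n (fun i => c * f i) = c * rsum n f.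
Proof. induction n; simpl; [ring|rewrite IHn; ring]. Qed.
Lemma rsum_nonneg (n : nat) (f : nat -> R) :
  (forall i, (i < n)%nat -> 0 <= f i) -> 0 <= rsum n f.
Proof.
  induction n; simpl; intros H; [lra|].
  assert (0 <= f n) by (apply H; lia).
  assert (0 <= rsum n f) by (apply IHn; intros; apply H; lia). lra.
Qed.
Lemma rsum_nonneg_zero (n : nat) (f : nat -> R) :
  (forall i, (i < n)%nat -> 0 <= f i) -> rsum n f = 0 -> forall i, (i < n)%nat -> f i = 0.
Proof.
  induction n; simpl; intros H Hs i Hi; [lia|].
  assert (0 <= f n) by (apply H; lia).
  assert (0 <= rsum n f) by (apply rsum_nonneg; intros; apply H; lia).
  destruct (Nat.eq_dec i n); [subst; lra|].
  apply IHn; [intros; apply H; lia|lra|lia].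
Qed.
Lemma rsum_triangle (n : nat) (F : nat -> nat -> R) :
  rsum n (fun i => rsum n (fun j => F i j)) =
  rsum n (fun i => F i i) + rsum n (fun j => rsum j (fun i => F i j + F j i)).
Proof.
  induction n; simpl; [ring|].
  rewrite !rsum_plus, IHn. change (rsum n (fun j => F n j)) with (rsum n (F n)). ring.
Qed.

(** ** Kronecker delta and orthonormal bases *)

Definition dl (i k : nat) : Cplx := if Nat.eqb i k then Cone else Czero.

Lemma dl_refl (i : nat) : dl i i = Cone.
Proof. unfold dl; rewrite Nat.eqb_refl; reflexivity. Qed.
Lemma dl_neq (i j : nat) : i <> j -> dl i j = Czero.
Proof. unfold dl; destruct (Nat.eqb_spec i j); [contradiction|reflexivity]. Qed.
Lemma dl_sym (i j : nat) : dl i j = dl j i.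
Proof. unfold dl; rewrite Nat.eqb_sym; reflexivity. Qed.
Lemma Cconj_dl (i j : nat) : Cconj (dl i j) = dl i j.
Proof. unfold dl; destruct (Nat.eqb i j); [apply Cconj_one|apply Cconj_zero]. Qed.

Lemma Csum_delta_l (n i : nat) (f : nat -> Cplx) :
  (i < n)%nat -> Csum n (fun k => Cmul (dl i k) (f k)) = f i.
Proof.
  induction n; intros H; simpl; [lia|].
  destruct (Nat.eq_dec i n) as [->|Hne].
  - rewrite (Csum_ext _ _ (fun _ => Czero)), Csum_zero, dl_refl; [ring|].
    intros k Hk. rewrite dl_neq by lia. ring.
  - rewrite IHn, dl_neq by lia. ring.
Qed.
Lemma Csum_delta_r (n i : nat) (f : nat -> Cplx) :
  (i < n)%nat -> Csum n (fun k => Cmul (f k) (dl k i)) = f i.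
Proof.
  intros H. rewrite <- (Csum_delta_l n i f H). apply Csum_ext; intros k _.
  rewrite dl_sym. ring.
Qed.

Lemma braket_conj (d : nat) (u v : nat -> Cplx) : Cconj (braket d u v) = braket d v u.
Proof.
  unfold braket. rewrite Cconj_Csum. apply Csum_ext; intros.
  rewrite Cconj_mul, Cconj_invol. ring.
Qed.

Definition ONB (d : nat) (W : nat -> nat -> Cplx) : Prop :=
  forall i j, (i < d)%nat -> (j < d)%nat -> braket d (W i) (W j) = dl i j.

Definition dual_gram (d : nat) (W : nat -> nat -> Cplx) (a b : nat) : Cplx :=
  Csum d (fun k => Cmul (W k a) (Cconj (W k b))).

Section Completeness.
Variables (d : nat) (W : nat -> nat -> Cplx).
Hypothesis ON : ONB d W.

(* Completeness is shown by proving Σ_{a,b} |δ_ab - B_ab|^2 = 0 for B the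
   dual Gram matrix; the expansion needs tr B = d and Σ |B_ab|^2 = d. *)
Lemma dual_gram_trace : Csum d (fun a => dual_gram d W a a) = Csum d (fun _ => Cone).
Proof.
  unfold dual_gram. rewrite Csum_swap. apply Csum_ext; intros k Hk.
  rewrite <- (dl_refl k), <- (ON k k Hk Hk). unfold braket. apply Csum_ext; intros; ring.
Qed.

Lemma dual_gram_frobenius :
  Csum d (fun a => Csum d (fun b => Cmul (dual_gram d W a b) (Cconj (dual_gram d W a b)))) =
  Csum d (fun _ => Cone).
Proof.
  transitivity (Csum d (fun k => Csum d (fun k' =>
    Cmul (braket d (W k') (W k)) (braket d (W k) (W k'))))).
  - transitivity (Csum d (fun a => Csum d (fun b => Csum d (fun k => Csum d (fun k' =>
      Cmul (Cmul (Cconj (W k' a)) (W k a)) (Cmul (Cconj (W k b)) (W k' b))))))).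
    { apply Csum_ext; intros a _; apply Csum_ext; intros b _. unfold dual_gram.
      rewrite Cconj_Csum, Csum_prod. apply Csum_ext; intros k _.
      apply Csum_ext; intros k' _. rewrite Cconj_mul, Cconj_invol. ring. }
    rewrite Csum_swap. rewrite (Csum_ext _ _ (fun b => Csum d (fun k => Csum d (fun k' =>
      Csum d (fun a => Cmul (Cmul (Cconj (W k' a)) (W k a)) (Cmul (Cconj (W k b)) (W k' b))))))).
    2:{ intros b _. rewrite Csum_swap. apply Csum_ext; intros k _. apply Csum_swap. }
    rewrite Csum_swap. apply Csum_ext; intros k _. rewrite Csum_swap.
    apply Csum_ext; intros k' _. unfold braket. rewrite Csum_prod, Csum_swap. reflexivity.
  - apply Csum_ext; intros k Hk.
    rewrite (Csum_ext _ _ (fun k' => Cmul (dl k k') (dl k k'))).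
    + rewrite Csum_delta_l, dl_refl by auto. reflexivity.
    + intros k' Hk'. rewrite ON, ON by auto. rewrite dl_sym. reflexivity.
Qed.

Lemma onb_complete (a b : nat) : (a < d)%nat -> (b < d)%nat -> dual_gram d W a b = dl a b.
Proof.
  set (B := dual_gram d W).
  assert (Hdefect : Csum d (fun a => Csum d (fun b =>
    Cmul (Csub (dl a b) (B a b)) (Cconj (Csub (dl a b) (B a b))))) = Czero).
  { transitivity (Csum d (fun a => Cadd (Cadd Cone (Copp (Cconj (B a a))))
       (Cadd (Copp (B a a)) (Csum d (fun b => Cmul (B a b) (Cconj (B a b))))))).
    - apply Csum_ext; intros a' Ha'.
      transitivity (Csum d (fun b => Cadd
        (Cadd (Cmul (dl a' b) Cone) (Copp (Cmul (dl a' b) (Cconj (B a' b)))))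
        (Cadd (Copp (Cmul (B a' b) (dl b a'))) (Cmul (B a' b) (Cconj (B a' b)))))).
      + apply Csum_ext; intros b' _. unfold Csub.
        rewrite Cconj_add, Cconj_opp, Cconj_dl, (dl_sym b').
        unfold dl; destruct (Nat.eqb a' b'); ring.
      + rewrite !Csum_add, !Csum_opp, !Csum_delta_l, Csum_delta_r by auto. reflexivity.
    - rewrite !Csum_add, !Csum_opp, <- Cconj_Csum. unfold B.
      rewrite dual_gram_trace, dual_gram_frobenius, Cconj_Csum, Cconj_one. ring. }
  intros Ha Hb.
  assert (Hre := f_equal Cre Hdefect). rewrite Cre_Csum in Hre. setoid_rewrite Cre_Csum in Hre.
  assert (Hrow := rsum_nonneg_zero d _
    (fun a _ => rsum_nonneg d _ (fun b _ => normsq_nonneg _)) Hre a Ha).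
  assert (Hab := rsum_nonneg_zero d _ (fun b _ => normsq_nonneg _) Hrow b Hb).
  apply normsq_zero in Hab. fold (B a b).
  replace (B a b) with (Csub (dl a b) (Csub (dl a b) (B a b))) by (unfold Csub; ring).
  rewrite Hab. unfold Csub. ring.
Qed.

End Completeness.

Definition melem (d : nat) (W X : nat -> nat -> Cplx) (i j : nat) : Cplx :=
  Csum d (fun a => Csum d (fun b => Cmul (Cmul (Cconj (W i a)) (X a b)) (W j b))).

(* The operator Σ_k P_k |W_k⟩⟨W_k|; [rho_of] at θ is literally of this form. *)
Definition spectral (d : nat) (P : nat -> R) (W : nat -> nat -> Cplx) : nat -> nat -> Cplx :=
  fun a b => Csum d (fun k => Cmul (RtoC (P k)) (Cmul (W k a) (Cconj (W k b)))).

Lemma melem_ext (d : nat) (W X Y : nat -> nat -> Cplx) (i j : nat) :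
  (forall a b, (a < d)%nat -> (b < d)%nat -> X a b = Y a b) -> melem d W X i j = melem d W Y i j.
Proof.
  intros H; unfold melem; apply Csum_ext; intros a Ha; apply Csum_ext; intros b Hb.
  rewrite H; auto.
Qed.
Lemma melem_add (d : nat) (W X Y : nat -> nat -> Cplx) (i j : nat) :
  melem d W (fun a b => Cadd (X a b) (Y a b)) i j = Cadd (melem d W X i j) (melem d W Y i j).
Proof.
  unfold melem. rewrite <- Csum_add. apply Csum_ext; intros a _.
  rewrite <- Csum_add. apply Csum_ext; intros; ring.
Qed.
Lemma melem_scal (d : nat) (W : nat -> nat -> Cplx) (c : Cplx) (X : nat -> nat -> Cplx) (i j : nat) :
  melem d W (fun a b => Cmul c (X a b)) i j = Cmul c (melem d W X i j).
Proof.
  unfold melem. rewrite <- Csum_mul_l. apply Csum_ext; intros a _.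
  rewrite <- Csum_mul_l. apply Csum_ext; intros; ring.
Qed.

Lemma melem_rank (d : nat) (W : nat -> nat -> Cplx) (c : nat -> Cplx) (U V : nat -> nat -> Cplx)
  (i j : nat) :
  melem d W (fun a b => Csum d (fun k => Cmul (c k) (Cmul (U k a) (Cconj (V k b))))) i j =
  Csum d (fun k => Cmul (c k) (Cmul (braket d (W i) (U k)) (braket d (V k) (W j)))).
Proof.
  unfold melem, braket.
  transitivity (Csum d (fun a => Csum d (fun k => Csum d (fun b =>
    Cmul (c k) (Cmul (Cmul (Cconj (W i a)) (U k a)) (Cmul (Cconj (V k b)) (W j b))))))).
  - apply Csum_ext; intros a _. rewrite <- Csum_swap. apply Csum_ext; intros b _.
    rewrite <- Csum_mul_l, <- Csum_mul_r. apply Csum_ext; intros; ring.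
  - rewrite Csum_swap. apply Csum_ext; intros k _.
    rewrite Csum_prod, <- Csum_mul_l. apply Csum_ext; intros a _.
    rewrite <- Csum_mul_l. apply Csum_ext; intros; ring.
Qed.

Lemma trace_spectral (d : nat) (P : nat -> R) (W X : nat -> nat -> Cplx) :
  mtrace d (mmul d (spectral d P W) X) = Csum d (fun k => Cmul (RtoC (P k)) (melem d W X k k)).
Proof.
  unfold mtrace, mmul, spectral, melem.
  transitivity (Csum d (fun a => Csum d (fun k => Csum d (fun c =>
    Cmul (RtoC (P k)) (Cmul (Cmul (Cconj (W k c)) (X c a)) (W k a)))))).
  - apply Csum_ext; intros a _. rewrite <- Csum_swap. apply Csum_ext; intros c _.
    rewrite <- Csum_mul_r. apply Csum_ext; intros; ring.
  - rewrite Csum_swap. apply Csum_ext; intros k _. rewrite Csum_swap, <- Csum_mul_l.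
    apply Csum_ext; intros c _. rewrite <- Csum_mul_l. apply Csum_ext; intros; ring.
Qed.

Section OrthonormalExpansion.
Variables (d : nat) (W : nat -> nat -> Cplx).
Hypothesis ON : ONB d W.

(* Parseval: inserting Σ_m |W_m⟩⟨W_m| = 1 between u and v. *)
Lemma onb_parseval (u v : nat -> Cplx) :
  Csum d (fun m => Cmul (Csum d (fun c => Cmul (u c) (W m c)))
                        (Csum d (fun c => Cmul (Cconj (W m c)) (v c)))) =
  Csum d (fun c => Cmul (u c) (v c)).
Proof.
  transitivity (Csum d (fun c => Csum d (fun c' =>
    Cmul (Cmul (u c) (v c')) (dual_gram d W c c')))).
  - unfold dual_gram.
    transitivity (Csum d (fun m => Csum d (fun c => Csum d (fun c' =>
      Cmul (Cmul (u c) (v c')) (Cmul (W m c) (Cconj (W m c'))))))).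
    + apply Csum_ext; intros m _. rewrite Csum_prod. apply Csum_ext; intros c _.
      apply Csum_ext; intros; ring.
    + rewrite Csum_swap. apply Csum_ext; intros c _. rewrite Csum_swap.
      apply Csum_ext; intros c' _. apply Csum_mul_l.
  - apply Csum_ext; intros c Hc.
    rewrite (Csum_ext _ _ (fun c' => Cmul (dl c c') (Cmul (u c) (v c')))).
    + apply Csum_delta_l; auto.
    + intros c' Hc'. rewrite onb_complete by auto. ring.
Qed.

Lemma melem_mmul (X Y : nat -> nat -> Cplx) (i j : nat) :
  melem d W (mmul d X Y) i j = Csum d (fun m => Cmul (melem d W X i m) (melem d W Y m j)).
Proof.
  set (u := fun c => Csum d (fun a => Cmul (Cconj (W i a)) (X a c))).
  set (v := fun c => Csum d (fun b => Cmul (Y c b) (W j b))).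
  transitivity (Csum d (fun c => Cmul (u c) (v c))).
  - unfold melem, mmul, u, v.
    transitivity (Csum d (fun a => Csum d (fun c => Csum d (fun b =>
      Cmul (Cmul (Cconj (W i a)) (X a c)) (Cmul (Y c b) (W j b)))))).
    + apply Csum_ext; intros a _. rewrite Csum_swap. apply Csum_ext; intros b _.
      rewrite <- Csum_mul_l, <- Csum_mul_r. apply Csum_ext; intros; ring.
    + rewrite Csum_swap. apply Csum_ext; intros c _. rewrite <- Csum_mul_r.
      apply Csum_ext; intros a _. apply Csum_mul_l.
  - rewrite <- onb_parseval. apply Csum_ext; intros m _. f_equal.
    + unfold melem, u. rewrite Csum_swap. apply Csum_ext; intros c _. symmetry; apply Csum_mul_r.
    + unfold melem, v. apply Csum_ext; intros c _. rewrite <- Csum_mul_l.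
      apply Csum_ext; intros; ring.
Qed.

Lemma melem_spectral (P : nat -> R) (i j : nat) : (i < d)%nat -> (j < d)%nat ->
  melem d W (spectral d P W) i j = Cmul (RtoC (P i)) (dl i j).
Proof.
  intros Hi Hj. unfold spectral. rewrite melem_rank.
  rewrite (Csum_ext _ _ (fun k => Cmul (dl i k) (Cmul (RtoC (P k)) (dl k j)))).
  - apply Csum_delta_l; auto.
  - intros k Hk. rewrite ON, ON by auto. ring.
Qed.

End OrthonormalExpansion.

(** ** The defect C_L - H_SLD in the eigenbasis *)

Definition conn (d : nat) (W : nat -> nat -> Cplx) (dw : nat -> nat -> nat -> Cplx)
  (m i j : nat) : Cplx :=
  braket d (W i) (dw j m).

Section EigenbasisIdentity.
Variables (d p : nat) (W : nat -> nat -> Cplx) (P : nat -> R) (dp : nat -> nat -> R)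
  (dw : nat -> nat -> nat -> Cplx) (drho lam : nat -> nat -> nat -> Cplx).
Hypothesis ON : ONB d W.
Hypothesis P_nonneg : forall i, (i < d)%nat -> 0 <= P i.
(* Orthonormality, differentiated. *)
Hypothesis onb_deriv : forall m i j, (m < p)%nat -> (i < d)%nat -> (j < d)%nat ->
  Cadd (braket d (dw i m) (W j)) (braket d (W i) (dw j m)) = Czero.
(* ρ = Σ_k p_k |w_k⟩⟨w_k|, differentiated by the product rule. *)
Hypothesis rho_deriv : forall l a b, (l < p)%nat -> (a < d)%nat -> (b < d)%nat ->
  drho l a b = Csum d (fun k =>
    Cadd (Cmul (RtoC (dp k l)) (Cmul (W k a) (Cconj (W k b))))
         (Cmul (RtoC (P k)) (Cadd (Cmul (dw k l a) (Cconj (W k b)))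
                                  (Cmul (W k a) (Cconj (dw k l b)))))).
Hypothesis sld_eq : forall k a b, (k < p)%nat -> (a < d)%nat -> (b < d)%nat ->
  drho k a b = Cmul (RtoC (/ 2))
    (Cadd (mmul d (spectral d P W) (lam k) a b) (mmul d (lam k) (spectral d P W) a b)).

Local Notation A := (conn d W dw).
Local Notation Lam k := (melem d W (lam k)).

Lemma conn_adjoint (m i j : nat) : (m < p)%nat -> (i < d)%nat -> (j < d)%nat ->
  braket d (dw i m) (W j) = Copp (A m i j).
Proof.
  intros Hm Hi Hj. unfold conn.
  transitivity (Cadd (Cadd (braket d (dw i m) (W j)) (braket d (W i) (dw j m)))
                     (Copp (braket d (W i) (dw j m)))); [ring|].
  rewrite onb_deriv by auto. ring.
Qed.

Lemma conn_antiherm (m i j : nat) : (m < p)%nat -> (i < d)%nat -> (j < d)%nat ->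
  A m j i = Copp (Cconj (A m i j)).
Proof.
  intros Hm Hi Hj. unfold conn at 1.
  rewrite <- braket_conj, conn_adjoint, Cconj_opp by auto. reflexivity.
Qed.

Lemma melem_drho (k i j : nat) : (k < p)%nat -> (i < d)%nat -> (j < d)%nat ->
  melem d W (drho k) i j =
  Cadd (Cmul (RtoC (dp i k)) (dl i j)) (Cmul (RtoC (P j - P i)) (A k i j)).
Proof.
  intros Hk Hi Hj.
  rewrite (melem_ext d W (drho k) (fun a b => Cadd (Cadd
      (Csum d (fun k' => Cmul (RtoC (dp k' k)) (Cmul (W k' a) (Cconj (W k' b)))))
      (Csum d (fun k' => Cmul (RtoC (P k')) (Cmul (dw k' k a) (Cconj (W k' b))))))
      (Csum d (fun k' => Cmul (RtoC (P k')) (Cmul (W k' a) (Cconj (dw k' k b))))))).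
  2:{ intros a b Ha Hb. rewrite rho_deriv by auto. rewrite <- !Csum_add.
      apply Csum_ext; intros; ring. }
  rewrite !melem_add, !melem_rank.
  rewrite (Csum_ext _ _ (fun k' => Cmul (dl i k') (Cmul (RtoC (dp k' k)) (dl k' j))))
    by (intros; rewrite ON, ON by auto; ring).
  rewrite Csum_delta_l by auto.
  rewrite (Csum_ext _ _ (fun k' => Cmul (Cmul (RtoC (P k')) (A k i k')) (dl k' j)))
    by (intros k' Hk'; rewrite (ON k' j) by auto;
        change (fun a : nat => dw k' k a) with (dw k' k); unfold conn; ring).
  rewrite Csum_delta_r by auto.
  rewrite (Csum_ext _ _ (fun k' => Cmul (dl i k') (Cmul (RtoC (P k')) (braket d (dw k' k) (W j)))))
    by (intros k' Hk'; rewrite (ON i k') by auto;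
        change (fun b : nat => dw k' k b) with (dw k' k); ring).
  rewrite Csum_delta_l, conn_adjoint by auto.
  unfold Rminus. rewrite RtoC_add, RtoC_opp. ring.
Qed.

Lemma melem_drho_sld (k i j : nat) : (k < p)%nat -> (i < d)%nat -> (j < d)%nat ->
  melem d W (drho k) i j = Cmul (RtoC (/ 2 * (P i + P j))) (Lam k i j).
Proof.
  intros Hk Hi Hj.
  rewrite (melem_ext d W (drho k) _ i j (fun a b => sld_eq k a b Hk)), melem_scal, melem_add.
  rewrite !melem_mmul by auto.
  rewrite (Csum_ext _ _ (fun m => Cmul (dl i m) (Cmul (RtoC (P i)) (Lam k m j))))
    by (intros m Hm; rewrite melem_spectral by auto; ring).
  rewrite Csum_delta_l by auto.
  rewrite (Csum_ext _ _ (fun m => Cmul (Cmul (Lam k i m) (RtoC (P m))) (dl m j)))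
    by (intros m Hm; rewrite melem_spectral by auto; ring).
  rewrite Csum_delta_r by auto.
  rewrite RtoC_mul, RtoC_add. ring.
Qed.

Lemma sld_diag (k i : nat) : (k < p)%nat -> (i < d)%nat -> 0 < P i ->
  Lam k i i = RtoC (dp i k / P i).
Proof.
  intros Hk Hi HP. assert (E := melem_drho_sld k i i Hk Hi Hi).
  rewrite melem_drho, dl_refl in E by auto. replace (P i - P i) with 0 in E by ring.
  symmetry in E. apply RtoC_mul_solve in E; [|lra]. rewrite E.
  apply C_ext; unfold Cmul, Cadd, RtoC, Cone; simpl; field; lra.
Qed.

Lemma sld_offdiag (k i j : nat) : (k < p)%nat -> (i < d)%nat -> (j < d)%nat -> i <> j ->
  0 < P i + P j -> Lam k i j = Cmul (RtoC (2 / (P i + P j) * (P j - P i))) (A k i j).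
Proof.
  intros Hk Hi Hj Hij HP. assert (E := melem_drho_sld k i j Hk Hi Hj).
  rewrite melem_drho, dl_neq in E by auto.
  symmetry in E. apply RtoC_mul_solve in E; [|lra]. rewrite E.
  destruct (A k i j). apply C_ext; unfold Cmul, Cadd, RtoC, Czero; simpl; field; lra.
Qed.

Lemma H_SLD_eigen (k l : nat) :
  Cre (mtrace d (mmul d (spectral d P W) (mmul d (lam k) (lam l)))) =
  rsum d (fun i => rsum d (fun j => P i * Cre (Cmul (Lam k i j) (Lam l j i)))).
Proof.
  rewrite trace_spectral, Cre_Csum. apply rsum_ext; intros i Hi.
  rewrite Cre_RtoC_mul, melem_mmul, Cre_Csum, <- rsum_scal by auto. reflexivity.
Qed.

Lemma diag_information (k l i : nat) : (k < p)%nat -> (l < p)%nat -> (i < d)%nat ->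
  (if Req_EM_T (P i) 0 then 0 else / P i * dp i k * dp i l) =
  P i * Cre (Cmul (Lam k i i) (Lam l i i)).
Proof.
  intros Hk Hl Hi. destruct (Req_EM_T (P i) 0) as [E0|E0]; [rewrite E0; ring|].
  assert (0 < P i) by (assert (h := P_nonneg i Hi); lra).
  rewrite !sld_diag by auto. unfold Cre, Cmul, RtoC; simpl. field. auto.
Qed.

Lemma pair_information (k l i j : nat) :
  (k < p)%nat -> (l < p)%nat -> (i < d)%nat -> (j < d)%nat -> i <> j ->
  4 * Cre (Cmul (RtoC (P i + P j))
                (Cmul (braket d (dw i k) (W j)) (braket d (W j) (dw i l)))) =
  (P i * Cre (Cmul (Lam k i j) (Lam l j i)) + P j * Cre (Cmul (Lam k j i) (Lam l i j)))
  + 16 * P i * P j * / (P i + P j) * Cre (Cmul (A k i j) (Cconj (A l i j))).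
Proof.
  intros Hk Hl Hi Hj Hij.
  assert (hi := P_nonneg i Hi). assert (hj := P_nonneg j Hj).
  rewrite conn_adjoint by auto. change (braket d (W j) (dw i l)) with (A l j i).
  rewrite (conn_antiherm l i j) by auto.
  destruct (Req_dec (P i + P j) 0) as [E0|E0].
  - replace (P i) with 0 by lra. replace (P j) with 0 by lra. rewrite Rplus_0_l.
    destruct (A k i j), (A l i j). unfold Cre, Cmul, RtoC, Copp, Cconj; simpl. ring.
  - rewrite (sld_offdiag k i j), (sld_offdiag l j i), (sld_offdiag k j i), (sld_offdiag l i j)
      by (auto; lra).
    rewrite (conn_antiherm l i j), (conn_antiherm k i j) by auto.
    destruct (A k i j), (A l i j). unfold Cre, Cmul, RtoC, Copp, Cconj; simpl. field. auto.
Qed.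

Lemma CL_minus_HSLD (k l : nat) : (k < p)%nat -> (l < p)%nat ->
  C_L d P dp W dw k l - Cre (mtrace d (mmul d (spectral d P W) (mmul d (lam k) (lam l)))) =
  rsum d (fun j => rsum j (fun i =>
    16 * P i * P j * / (P i + P j) * Cre (Cmul (A k i j) (Cconj (A l i j))))).
Proof.
  intros Hk Hl. rewrite H_SLD_eigen, rsum_triangle. unfold C_L.
  rewrite (rsum_ext d _ (fun i => P i * Cre (Cmul (Lam k i i) (Lam l i i))))
    by (intros; apply diag_information; auto).
  rewrite Cre_Csum. setoid_rewrite Cre_Csum.
  assert (Hoff : forall j, (j < d)%nat ->
    4 * rsum j (fun i => Cre (Cmul (RtoC (P i + P j))
          (Cmul (braket d (dw i k) (W j)) (braket d (W j) (dw i l))))) =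
    rsum j (fun i => P i * Cre (Cmul (Lam k i j) (Lam l j i))
                   + P j * Cre (Cmul (Lam k j i) (Lam l i j)))
    + rsum j (fun i => 16 * P i * P j * / (P i + P j) * Cre (Cmul (A k i j) (Cconj (A l i j))))).
  { intros j Hj. rewrite <- rsum_scal, <- rsum_plus. apply rsum_ext; intros i Hi.
    apply pair_information; lia. }
  rewrite <- rsum_scal, (rsum_ext d _ _ Hoff), rsum_plus. ring.
Qed.

Lemma pair_weight_nonneg (i j : nat) : (i < d)%nat -> (j < d)%nat ->
  0 <= 16 * P i * P j * / (P i + P j).
Proof.
  intros Hi Hj. assert (hi := P_nonneg i Hi). assert (hj := P_nonneg j Hj).
  destruct (Req_dec (P i + P j) 0) as [E0|E0].
  - replace (P i) with 0 by lra. lra.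
  - assert (0 < / (P i + P j)) by (apply Rinv_0_lt_compat; lra).
    apply Rmult_le_pos; [|lra]. nra.
Qed.

Lemma conn_vanish (m : nat) : (m < p)%nat ->
  C_L d P dp W dw m m = Cre (mtrace d (mmul d (spectral d P W) (mmul d (lam m) (lam m)))) ->
  forall i j, (i < d)%nat -> (j < d)%nat -> i <> j -> 0 < P i -> 0 < P j -> A m i j = Czero.
Proof.
  intros Hm Heq.
  assert (Z := CL_minus_HSLD m m Hm Hm). rewrite Heq, Rminus_diag in Z. symmetry in Z.
  assert (Hlt : forall i j, (i < j)%nat -> (j < d)%nat -> 0 < P i -> 0 < P j -> A m i j = Czero).
  { intros i j Hij Hj Pi Pj.
    assert (Zj := rsum_nonneg_zero d _ (fun j' Hj' => rsum_nonneg j' _ (fun i' Hi' =>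
      Rmult_le_pos _ _ (pair_weight_nonneg i' j' ltac:(lia) Hj') (normsq_nonneg _))) Z j Hj).
    assert (Zij := rsum_nonneg_zero j _ (fun i' Hi' =>
      Rmult_le_pos _ _ (pair_weight_nonneg i' j ltac:(lia) Hj) (normsq_nonneg _)) Zj i Hij).
    apply normsq_zero. apply Rmult_integral in Zij. destruct Zij as [Zw|]; [|auto].
    assert (0 < / (P i + P j)) by (apply Rinv_0_lt_compat; lra).
    assert (0 < 16 * P i * P j) by nra. nra. }
  intros i j Hi Hj Hij Pi Pj. destruct (Nat.lt_total i j) as [H1|[H1|H1]].
  - auto.
  - contradiction.
  - rewrite (conn_antiherm m j i), Hlt by auto.
    apply C_ext; unfold Copp, Cconj, Czero; simpl; ring.
Qed.

Theorem CL_eq_HSLD_iff :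
  (forall k l, (k < p)%nat -> (l < p)%nat ->
     Cre (mtrace d (mmul d (spectral d P W) (mmul d (lam k) (lam l)))) = C_L d P dp W dw k l)
  <->
  (forall m j k, (m < p)%nat -> (j < d)%nat -> (k < d)%nat -> j <> k ->
     0 < P j -> 0 < P k -> braket d (dw j m) (W k) = Czero).
Proof.
  split.
  - intros Heq m j k Hm Hj Hk Hjk Pj Pk.
    rewrite conn_adjoint, (conn_vanish m Hm (eq_sym (Heq m m Hm Hm))) by auto.
    apply C_ext; unfold Copp, Czero; simpl; ring.
  - intros Hzero k l Hk Hl. assert (Z := CL_minus_HSLD k l Hk Hl).
    rewrite (rsum_ext d _ (fun _ => 0)), rsum_zero in Z; [lra|].
    intros j Hj. rewrite (rsum_ext j _ (fun _ => 0)), rsum_zero; [reflexivity|].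
    intros i Hi. assert (hi := P_nonneg i ltac:(lia)). assert (hj := P_nonneg j Hj).
    destruct (Req_dec (P i) 0) as [E0|E0]; [rewrite E0; ring|].
    destruct (Req_dec (P j) 0) as [E1|E1]; [rewrite E1; ring|].
    assert (E : A k i j = Czero).
    { assert (Q := Hzero k i j Hk ltac:(lia) Hj ltac:(lia) ltac:(lra) ltac:(lra)).
      rewrite conn_adjoint in Q by (auto; lia).
      replace (A k i j) with (Copp (Copp (A k i j))) by ring. rewrite Q.
      apply C_ext; unfold Copp, Czero; simpl; ring. }
    rewrite E. unfold Cre, Cmul, Czero, Cconj; simpl. ring.
Qed.

End EigenbasisIdentity.

(** ** Derivatives of complex-valued functions of one real variable *)

Definition cderiv (F : R -> Cplx) (x : R) (v : Cplx) : Prop :=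
  derivable_pt_lim (fun t => Cre (F t)) x (Cre v) /\
  derivable_pt_lim (fun t => Cim (F t)) x (Cim v).

Lemma derivable_pt_lim_value (f : R -> R) (x a b : R) :
  derivable_pt_lim f x a -> a = b -> derivable_pt_lim f x b.
Proof. intros H <-; exact H. Qed.

Lemma cderiv_const (c : Cplx) (x : R) : cderiv (fun _ => c) x Czero.
Proof. split; apply derivable_pt_lim_const. Qed.

Lemma cderiv_RtoC (f : R -> R) (x a : R) :
  derivable_pt_lim f x a -> cderiv (fun t => RtoC (f t)) x (RtoC a).
Proof. intros H; split; [exact H|apply derivable_pt_lim_const]. Qed.

Lemma cderiv_conj (F : R -> Cplx) (x : R) (a : Cplx) :
  cderiv F x a -> cderiv (fun t => Cconj (F t)) x (Cconj a).
Proof. intros [H1 H2]; split; [exact H1|exact (derivable_pt_lim_opp _ _ _ H2)]. Qed.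

Lemma cderiv_add (F G : R -> Cplx) (x : R) (a b : Cplx) : cderiv F x a -> cderiv G x b ->
  cderiv (fun t => Cadd (F t) (G t)) x (Cadd a b).
Proof.
  intros [H1 H2] [H3 H4];
    split; [exact (derivable_pt_lim_plus _ _ _ _ _ H1 H3)
           |exact (derivable_pt_lim_plus _ _ _ _ _ H2 H4)].
Qed.

Lemma cderiv_mul (F G : R -> Cplx) (x : R) (a b : Cplx) : cderiv F x a -> cderiv G x b ->
  cderiv (fun t => Cmul (F t) (G t)) x (Cadd (Cmul a (G x)) (Cmul (F x) b)).
Proof.
  intros [H1 H2] [H3 H4]; split.
  - eapply derivable_pt_lim_value.
    + exact (derivable_pt_lim_minus _ _ _ _ _ (derivable_pt_lim_mult _ _ _ _ _ H1 H3)
                                              (derivable_pt_lim_mult _ _ _ _ _ H2 H4)).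
    + unfold Cre, Cim, Cadd, Cmul; simpl; ring.
  - eapply derivable_pt_lim_value.
    + exact (derivable_pt_lim_plus _ _ _ _ _ (derivable_pt_lim_mult _ _ _ _ _ H1 H4)
                                             (derivable_pt_lim_mult _ _ _ _ _ H2 H3)).
    + unfold Cre, Cim, Cadd, Cmul; simpl; ring.
Qed.

Lemma cderiv_Csum (n : nat) (F : nat -> R -> Cplx) (x : R) (v : nat -> Cplx) :
  (forall i, (i < n)%nat -> cderiv (F i) x (v i)) ->
  cderiv (fun t => Csum n (fun i => F i t)) x (Csum n v).
Proof.
  induction n; intros H; simpl; [apply cderiv_const|].
  apply cderiv_add; [apply IHn; intros; apply H|apply H]; lia.
Qed.

Lemma cderiv_unique (F : R -> Cplx) (x : R) (a b : Cplx) :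
  cderiv F x a -> cderiv F x b -> a = b.
Proof.
  intros [H1 H2] [H3 H4].
  apply C_ext; [exact (uniqueness_limite _ _ _ _ H1 H3)|exact (uniqueness_limite _ _ _ _ H2 H4)].
Qed.

Lemma cderiv_locally_const (F : R -> Cplx) (c : Cplx) (x eps : R) : 0 < eps ->
  (forall t, Rabs (t - x) < eps -> F t = c) -> cderiv F x Czero.
Proof.
  intros Heps HF.
  assert (Hloc : forall t, x - eps < t < x + eps -> c = F t).
  { intros t Ht. symmetry. apply HF. apply Rabs_def1; lra. }
  destruct (cderiv_const c x) as [H1 H2]; split;
    [apply (derivable_pt_lim_locally_ext (fun _ => Cre c)) with (x - eps) (x + eps)
    |apply (derivable_pt_lim_locally_ext (fun _ => Cim c)) with (x - eps) (x + eps)];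
    auto; try lra; intros t Ht; rewrite (Hloc t Ht); reflexivity.
Qed.

(** ** The differentiated relations for the smooth family *)

Lemma upd_same (x : nat -> R) (l : nat) : upd x l (x l) = x.
Proof.
  apply functional_extensionality; intros m; unfold upd.
  destruct (Nat.eqb_spec m l); subst; reflexivity.
Qed.

Lemma near_upd (p : nat) (x : nat -> R) (l : nat) (t eps : R) :
  (l < p)%nat -> 0 < eps -> Rabs (t - x l) < eps -> near p x (upd x l t) eps.
Proof.
  intros Hl He Ht. split; intros l' Hl'; unfold upd; destruct (Nat.eqb_spec l' l).
  - subst; auto.
  - unfold Rminus; rewrite Rplus_opp_r, Rabs_R0; auto.
  - lia.
  - reflexivity.
Qed.

Section FamilyDerivatives.
Variables (d p : nat) (Theta : (nat -> R) -> Prop)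
  (pk : nat -> (nat -> R) -> R) (w : nat -> nat -> (nat -> R) -> Cplx)
  (theta : nat -> R) (dp : nat -> nat -> R) (dw drho : nat -> nat -> nat -> Cplx).
Hypothesis HTheta : open_p p Theta.
Hypothesis Htheta : Theta theta.
Hypothesis Hw_onb : forall x, Theta x -> forall j k, (j < d)%nat -> (k < d)%nat ->
  braket d (fun i => w j i x) (fun i => w k i x) = if Nat.eqb j k then Cone else Czero.
Hypothesis Hdp : forall k l, (k < d)%nat -> (l < p)%nat -> partial_at (pk k) l theta (dp k l).
Hypothesis Hdw : forall k l i, (k < d)%nat -> (l < p)%nat -> (i < d)%nat ->
  partial_at (fun x => Cre (w k i x)) l theta (Cre (dw k l i)) /\
  partial_at (fun x => Cim (w k i x)) l theta (Cim (dw k l i)).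
Hypothesis Hdrho : forall l a b, (l < p)%nat -> (a < d)%nat -> (b < d)%nat ->
  partial_at (fun x => Cre (rho_of d pk w x a b)) l theta (Cre (drho l a b)) /\
  partial_at (fun x => Cim (rho_of d pk w x a b)) l theta (Cim (drho l a b)).

(* Orthonormality holds on the open set Theta, so its partial derivatives vanish. *)
Lemma onb_deriv_at (m i j : nat) : (m < p)%nat -> (i < d)%nat -> (j < d)%nat ->
  Cadd (braket d (dw i m) (fun a => w j a theta)) (braket d (fun a => w i a theta) (dw j m))
  = Czero.
Proof.
  intros Hm Hi Hj.
  set (G := fun t => braket d (fun a => w i a (upd theta m t)) (fun a => w j a (upd theta m t))).
  assert (Dprod : cderiv G (theta m)
    (Csum d (fun a => Cadd (Cmul (Cconj (dw i m a)) (w j a (upd theta m (theta m))))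
                           (Cmul (Cconj (w i a (upd theta m (theta m)))) (dw j m a))))).
  { apply (cderiv_Csum d (fun a t => Cmul (Cconj (w i a (upd theta m t))) (w j a (upd theta m t)))).
    intros a Ha. apply cderiv_mul; [apply cderiv_conj|]; [exact (Hdw i m a Hi Hm Ha)|exact (Hdw j m a Hj Hm Ha)]. }
  destruct (HTheta theta Htheta) as [eps [Heps Hball]].
  assert (Dconst : cderiv G (theta m) Czero).
  { apply (cderiv_locally_const G (dl i j) (theta m) eps Heps). intros t Ht.
    exact (Hw_onb _ (Hball _ (near_upd p theta m t eps Hm Heps Ht)) i j Hi Hj). }
  rewrite <- (cderiv_unique G _ _ _ Dprod Dconst), upd_same.
  unfold braket. rewrite <- Csum_add. reflexivity.
Qed.

Lemma rho_deriv_at (l a b : nat) : (l < p)%nat -> (a < d)%nat -> (b < d)%nat ->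
  drho l a b = Csum d (fun k =>
    Cadd (Cmul (RtoC (dp k l)) (Cmul (w k a theta) (Cconj (w k b theta))))
         (Cmul (RtoC (pk k theta)) (Cadd (Cmul (dw k l a) (Cconj (w k b theta)))
                                         (Cmul (w k a theta) (Cconj (dw k l b)))))).
Proof.
  intros Hl Ha Hb.
  assert (Dprod : cderiv (fun t => rho_of d pk w (upd theta l t) a b) (theta l)
    (Csum d (fun k => Cadd
      (Cmul (RtoC (dp k l)) (Cmul (w k a (upd theta l (theta l))) (Cconj (w k b (upd theta l (theta l))))))
      (Cmul (RtoC (pk k (upd theta l (theta l))))
            (Cadd (Cmul (dw k l a) (Cconj (w k b (upd theta l (theta l)))))
                  (Cmul (w k a (upd theta l (theta l))) (Cconj (dw k l b)))))))).
  { apply (cderiv_Csum d (fun k t => Cmul (RtoC (pk k (upd theta l t)))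
                                          (Cmul (w k a (upd theta l t)) (Cconj (w k b (upd theta l t)))))).
    intros k Hk.
    apply (cderiv_mul (fun t => RtoC (pk k (upd theta l t)))
                      (fun t => Cmul (w k a (upd theta l t)) (Cconj (w k b (upd theta l t)))));
      [apply cderiv_RtoC, (Hdp k l Hk Hl)|].
    apply (cderiv_mul (fun t => w k a (upd theta l t))); [exact (Hdw k l a Hk Hl Ha)|apply cderiv_conj; exact (Hdw k l b Hk Hl Hb)]. }
  rewrite (cderiv_unique _ _ _ _ (Hdrho l a b Hl Ha Hb) Dprod), upd_same. reflexivity.
Qed.

End FamilyDerivatives.

Theorem lemma7
  (d p : nat) (Theta : (nat -> R) -> Prop)
  (pk : nat -> (nat -> R) -> R) (w : nat -> nat -> (nat -> R) -> Cplx)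
  (HTheta : open_p p Theta)
  (Hp_smooth : forall k, (k < d)%nat -> smooth_on p Theta (pk k))
  (Hw_smooth : forall k i, (k < d)%nat -> (i < d)%nat ->
     smooth_on p Theta (fun x => Cre (w k i x)) /\
     smooth_on p Theta (fun x => Cim (w k i x)))
  (Hp_range : forall x, Theta x -> forall k, (k < d)%nat -> 0 <= pk k x <= 1)
  (Hp_sum : forall x, Theta x -> rsum d (fun k => pk k x) = 1)
  (Hw_onb : forall x, Theta x -> forall j k, (j < d)%nat -> (k < d)%nat ->
     braket d (fun i => w j i x) (fun i => w k i x) = if Nat.eqb j k then Cone else Czero)
  (theta : nat -> R) (Htheta : Theta theta)
  (* derivatives at theta *)
  (dp : nat -> nat -> R)
  (Hdp : forall k l, (k < d)%nat -> (l < p)%nat -> partial_at (pk k) l theta (dp k l))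
  (dw : nat -> nat -> nat -> Cplx)
  (Hdw : forall k l i, (k < d)%nat -> (l < p)%nat -> (i < d)%nat ->
     partial_at (fun x => Cre (w k i x)) l theta (Cre (dw k l i)) /\
     partial_at (fun x => Cim (w k i x)) l theta (Cim (dw k l i)))
  (drho : nat -> nat -> nat -> Cplx)
  (Hdrho : forall l a b, (l < p)%nat -> (a < d)%nat -> (b < d)%nat ->
     partial_at (fun x => Cre (rho_of d pk w x a b)) l theta (Cre (drho l a b)) /\
     partial_at (fun x => Cim (rho_of d pk w x a b)) l theta (Cim (drho l a b)))
  (* any Hermitian SLDs at theta *)
  (lam : nat -> nat -> nat -> Cplx)
  (Hlam : forall k, (k < p)%nat ->
     hermitian d (lam k) /\
     forall a b, (a < d)%nat -> (b < d)%nat ->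
       drho k a b =
       Cmul (RtoC (/ 2))
         (Cadd (mmul d (rho_of d pk w theta) (lam k) a b)
               (mmul d (lam k) (rho_of d pk w theta) a b))) :
  (forall k l, (k < p)%nat -> (l < p)%nat ->
     H_SLD d (rho_of d pk w theta) lam k l =
     C_L d (fun i => pk i theta) dp (fun i a => w i a theta) dw k l)
  <->
  (forall m j k, (m < p)%nat -> (j < d)%nat -> (k < d)%nat -> j <> k ->
     0 < pk j theta -> 0 < pk k theta ->
     braket d (dw j m) (fun i => w k i theta) = Czero).
Proof.
  (* At θ, ρ is the spectral operator of the eigenvalues p_i(θ) and eigenvectors w_i(θ),
     so the pointwise identity applies once its hypotheses are checked. *)
  apply (CL_eq_HSLD_iff d p (fun i a => w i a theta) (fun i => pk i theta) dp dw drho lam).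
  - intros i j Hi Hj. exact (Hw_onb theta Htheta i j Hi Hj).
  - intros i Hi. apply (Hp_range theta Htheta i Hi).
  - exact (onb_deriv_at d p Theta w theta dw HTheta Htheta Hw_onb Hdw).
  - exact (rho_deriv_at d p pk w theta dp dw drho Hdp Hdw Hdrho).
  - intros k a b Hk. exact (proj2 (Hlam k Hk) a b).
Qed.
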